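(* Let $(b_n)_{n\ge1}$ be a sequence of nonnegative real numbers and $f:\mathbb Z_{>0}\to\mathbb R_{\ge0}$ an increasing function with $\sum_{\alpha\ge1} f(2^\alpha)/2^\alpha<+\infty$. Suppose there is an integer $n_0>0$ such that $b_{n+m}\le b_n+b_m+f(n)+f(m)$ for all integers $m,n\ge n_0$. Then $(b_n/n)_{n\ge1}$ converges to a limit in $\mathbb R_{\ge0}$. *)

From Stdlib Require Export Reals Lra Lia.
Open Scope R_scope.

(* Partial sums  sum_{alpha=1}^{N+1} f(2^alpha)/2^alpha  of the series in the hypothesis. *)
Definition dyadic_partial (f : nat -> R) (N : nat) : R :=
  sum_f_R0 (fun a => f (2 ^ S a)%nat / 2 ^ S a) N.

From Stdlib Require Import Reals Lra Lia Classical.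
Open Scope R_scope.

(* Proof strategy: a dyadic refinement of Fekete's subadditivity argument.
   Write H(c) = sum_{a=1}^c f(2^a)/2^a for the partial sums of the dyadic series,
   l for its sum and T(c) = l - H(c) for its tails, which decrease to 0.
   1. Monotonicity of f and convergence give f(m) <= 2 m T(log2 m).
   2. Fix p >= n0 and put u = b_p/p.  Writing q = 2 q0 or 2 q0 + 1 and applying
      the almost-subadditivity once or twice, an induction on the dyadic block
      containing q p shows b(q p) <= q p (u + 8 T(log2 p)) for every q >= 1.
   3. Splitting m >= 2p as (q-1) p + (p + r) with r < p bounds
      b_m/m <= u + 8 T(log2 p) + B_p/m + 4 T(log2 m) for a constant B_p.
   4. Let L be the infimum over p >= n0 of g(p) = b_p/p + 8 T(log2 p); then
      L - 8 T(log2 m) <= b_m/m trivially, and step 3 with p chosen so that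
      g(p) is close to L squeezes b_m/m towards L. *)

Lemma pow2_ge1 (a : nat) : (1 <= 2 ^ a)%nat.
Proof. induction a; simpl; lia. Qed.

Lemma INR_pow2 (c : nat) : INR (2 ^ c)%nat = 2 ^ c.
Proof. rewrite pow_INR; simpl; now replace (1 + 1) with 2 by lra. Qed.

Lemma finite_upper_bound (g : nat -> R) (n : nat) :
  exists B, forall r, (r <= n)%nat -> g r <= B.
Proof.
  induction n as [|n [B HB]].
  - exists (g 0%nat). intros r Hr. replace r with 0%nat by lia. lra.
  - exists (Rmax B (g (S n))). intros r Hr.
    destruct (Nat.eq_dec r (S n)) as [->|Hne].
    + apply Rmax_r.
    + eapply Rle_trans; [apply HB; lia | apply Rmax_l].
Qed.

Lemma nat_infimum (P : nat -> Prop) (g : nat -> R) (p0 : nat) :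
  P p0 -> (forall p, P p -> 0 <= g p) ->
  exists L, 0 <= L /\ (forall p, P p -> L <= g p) /\
    (forall eps, 0 < eps -> exists p, P p /\ g p < L + eps).
Proof.
  intros Hp0 Hg.
  set (lower := fun x => forall p, P p -> x <= g p).
  destruct (completeness lower) as [L [Hub Hlub]].
  - exists (g p0). intros x Hx. now apply Hx.
  - exists 0. exact Hg.
  - exists L. split; [|split].
    + now apply Hub.
    + intros p Hp. apply Hlub. intros x Hx. now apply Hx.
    + intros eps Heps. apply NNPP. intros Hno.
      assert (Hlow : lower (L + eps)).
      { intros p Hp. apply Rnot_lt_le. intros Hlt. apply Hno. now exists p. }
      specialize (Hub _ Hlow). lra.
Qed.

Section DyadicSeries.

Variables (f : nat -> R) (l : R).
Hypothesis f_nonneg : forall n, (1 <= n)%nat -> 0 <= f n.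
Hypothesis f_mono : forall n m, (1 <= n)%nat -> (n <= m)%nat -> f n <= f m.
Hypothesis dyadic_cv : Un_cv (dyadic_partial f) l.

Definition dyadic_term (a : nat) : R := f (2 ^ a)%nat / 2 ^ a.

Fixpoint dyadic_sum (c : nat) : R :=
  match c with 0 => 0 | S c' => dyadic_sum c' + dyadic_term (S c') end.

Definition dyadic_tail (c : nat) : R := l - dyadic_sum c.

Lemma dyadic_term_nonneg (a : nat) : 0 <= dyadic_term a.
Proof.
  unfold dyadic_term. apply Rmult_le_pos.
  - apply f_nonneg, pow2_ge1.
  - left. apply Rinv_0_lt_compat, pow_lt. lra.
Qed.

Lemma dyadic_sum_mono (c1 c2 : nat) : (c1 <= c2)%nat -> dyadic_sum c1 <= dyadic_sum c2.
Proof.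
  induction 1; [lra|]. simpl. pose proof (dyadic_term_nonneg (S m)). lra.
Qed.

Lemma dyadic_sum_partial (N : nat) : dyadic_sum (S N) = dyadic_partial f N.
Proof.
  induction N as [|N IH].
  - unfold dyadic_partial. simpl dyadic_sum. simpl sum_f_R0. unfold dyadic_term. simpl. ring.
  - unfold dyadic_partial in *. rewrite tech5, <- IH. reflexivity.
Qed.

(* The partial sums increase, hence stay below their limit. *)
Lemma dyadic_tail_nonneg (c : nat) : 0 <= dyadic_tail c.
Proof.
  unfold dyadic_tail.
  enough (dyadic_sum (S c) <= l) by (pose proof (dyadic_sum_mono c (S c) ltac:(lia)); lra).
  rewrite dyadic_sum_partial. apply (growing_ineq _ _); [|exact dyadic_cv].
  intros n. rewrite <- !dyadic_sum_partial. apply dyadic_sum_mono; lia.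
Qed.

Lemma dyadic_tail_log2_small (eps : R) :
  0 < eps -> exists M, forall m, (M <= m)%nat -> dyadic_tail (Nat.log2 m) < eps.
Proof.
  intros Heps. destruct (dyadic_cv eps Heps) as [N HN].
  exists (2 ^ S N)%nat. intros m Hm.
  assert (Hlog : (S N <= Nat.log2 m)%nat).
  { rewrite <- (Nat.log2_pow2 (S N)) by lia. now apply Nat.log2_le_mono. }
  destruct (Nat.log2 m) as [|c] eqn:Hc; [lia|].
  specialize (HN c ltac:(lia)). unfold R_dist in HN. apply Rabs_def2 in HN.
  unfold dyadic_tail. rewrite dyadic_sum_partial. lra.
Qed.

Lemma f_pow2_le_term (c x : nat) : (2 ^ c <= x)%nat ->
  f (2 ^ S c)%nat <= 2 * INR x * dyadic_term (S c).
Proof.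
  intros Hx.
  assert (Hval : f (2 ^ S c)%nat = dyadic_term (S c) * (2 * 2 ^ c)).
  { unfold dyadic_term. simpl pow. field. apply pow_nonzero. lra. }
  assert (2 ^ c <= INR x) by (rewrite <- INR_pow2; now apply le_INR).
  pose proof (dyadic_term_nonneg (S c)). nra.
Qed.

(* Step 1: f(m) <= f(2^(c+1)) <= 2 m D(c+1) <= 2 m T(c) for c = log2 m. *)
Lemma f_le_tail (m : nat) : (1 <= m)%nat -> f m <= 2 * INR m * dyadic_tail (Nat.log2 m).
Proof.
  intros Hm. set (c := Nat.log2 m).
  destruct (Nat.log2_spec m ltac:(lia)) as [Hlo Hhi]. fold c in Hlo, Hhi.
  assert (Hfm : f m <= f (2 ^ S c)%nat) by (apply f_mono; lia).
  assert (Hterm : dyadic_term (S c) <= dyadic_tail c).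
  { pose proof (dyadic_tail_nonneg (S c)). unfold dyadic_tail in *. simpl in *. lra. }
  pose proof (f_pow2_le_term c m Hlo). pose proof (pos_INR m). nra.
Qed.

End DyadicSeries.

Section AlmostSubadditive.

Variables (b f : nat -> R) (n0 : nat) (l : R).
Hypothesis b_nonneg : forall n, (1 <= n)%nat -> 0 <= b n.
Hypothesis f_nonneg : forall n, (1 <= n)%nat -> 0 <= f n.
Hypothesis f_mono : forall n m, (1 <= n)%nat -> (n <= m)%nat -> f n <= f m.
Hypothesis dyadic_cv : Un_cv (dyadic_partial f) l.
Hypothesis n0_pos : (0 < n0)%nat.
Hypothesis b_sub : forall n m, (n0 <= n)%nat -> (n0 <= m)%nat ->
  b (n + m)%nat <= b n + b m + f n + f m.

Let H := dyadic_sum f.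
Let T := dyadic_tail f l.

Definition ratio (p : nat) : R := b p / INR p.

Lemma ratio_nonneg (p : nat) : (1 <= p)%nat -> 0 <= ratio p.
Proof.
  intros Hp. unfold ratio, Rdiv. apply Rmult_le_pos; [now apply b_nonneg|].
  left. apply Rinv_0_lt_compat, lt_0_INR. lia.
Qed.

Lemma ratio_mul (p : nat) : (1 <= p)%nat -> INR p * ratio p = b p.
Proof. intros Hp. unfold ratio. field. apply not_0_INR. lia. Qed.

Lemma doubling_step (p q0 q : nat) (A F : R) :
  (n0 <= p)%nat -> (1 <= q0)%nat -> (2 * q0 <= q <= 2 * q0 + 1)%nat ->
  ratio p <= A -> b (q0 * p)%nat <= INR (q0 * p) * A -> f (q * p)%nat <= F ->
  b (q * p)%nat <= INR (q * p) * A + 4 * F.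
Proof.
  intros Hp Hq0 Hq HuA Hb0 HF.
  set (x := (q0 * p)%nat) in *.
  assert (Hx : (n0 <= x)%nat) by (unfold x; nia).
  assert (Hfle : forall y, (1 <= y)%nat -> (y <= q * p)%nat -> f y <= F).
  { intros y Hy1 Hy2. eapply Rle_trans; [apply f_mono; eauto | exact HF]. }
  pose proof (Hfle x ltac:(unfold x; nia) ltac:(unfold x; nia)).
  pose proof (f_nonneg x ltac:(unfold x; nia)).
  pose proof (b_sub x x Hx Hx) as Heven.
  destruct (Nat.eq_dec q (2 * q0)) as [->|Hq_odd].
  - replace (2 * q0 * p)%nat with (x + x)%nat in * by (unfold x; lia).
    rewrite plus_INR. lra.
  - replace q with (2 * q0 + 1)%nat in * by lia.
    replace ((2 * q0 + 1) * p)%nat with (x + x + p)%nat in * by (unfold x; lia).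
    pose proof (b_sub (x + x) p ltac:(lia) Hp).
    pose proof (Hfle p ltac:(lia) ltac:(lia)).
    pose proof (Hfle (x + x)%nat ltac:(lia) ltac:(lia)).
    pose proof (f_nonneg p ltac:(lia)).
    assert (b p <= INR p * A).
    { rewrite <- ratio_mul by lia. pose proof (pos_INR p). nra. }
    rewrite !plus_INR. lra.
Qed.

Lemma b_multiple_block (p : nat) : (n0 <= p)%nat -> forall k q, (1 <= q)%nat ->
  (q * p < 2 ^ (Nat.log2 p + k))%nat ->
  b (q * p)%nat <=
    INR (q * p) * (ratio p + 8 * (H (Nat.log2 p + k) - H (Nat.log2 p))).
Proof.
  intros Hp k. pose proof (ratio_nonneg p ltac:(lia)) as Hu.
  induction k as [|k IH]; intros q Hq Hlt.
  - destruct (Nat.log2_spec p ltac:(lia)). rewrite Nat.add_0_r in Hlt. nia.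
  - rewrite Nat.add_succ_r in *. set (c := (Nat.log2 p + k)%nat) in *.
    pose proof (dyadic_sum_mono f f_nonneg (Nat.log2 p) c ltac:(lia)).
    pose proof (dyadic_term_nonneg f f_nonneg (S c)) as HD.
    unfold H in *. simpl dyadic_sum.
    set (A := ratio p + 8 * (dyadic_sum f c - dyadic_sum f (Nat.log2 p))) in *.
    replace (ratio p + 8 * (dyadic_sum f c + dyadic_term f (S c) - dyadic_sum f (Nat.log2 p)))
      with (A + 8 * dyadic_term f (S c)) by (unfold A; ring).
    assert (HuA : ratio p <= A) by (unfold A; lra).
    pose proof (pos_INR (q * p)).
    destruct (Nat.lt_ge_cases (q * p) (2 ^ c)) as [Hsmall|Hbig].
    { specialize (IH q Hq Hsmall). nra. }
    destruct (Nat.eq_dec q 1) as [->|Hq1].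
    { rewrite Nat.mul_1_l, <- ratio_mul by lia. pose proof (pos_INR p). nra. }
    (* Now 2^c <= q p, so the cost F = f(2^(c+1)) is at most 2 q p D(c+1). *)
    pose proof (f_pow2_le_term f f_nonneg c (q * p) Hbig) as HF.
    set (F := f (2 ^ S c)%nat) in HF.
    (* Descend to q0 = q/2, whose multiple lies in the previous block. *)
    set (q0 := Nat.div2 q).
    assert (Hq0 : (2 * q0 <= q <= 2 * q0 + 1)%nat).
    { pose proof (Nat.div2_odd q). unfold q0. destruct (Nat.odd q); simpl in *; lia. }
    assert (Hpow : (2 ^ S c = 2 * 2 ^ c)%nat) by (simpl; lia).
    assert (HIH : b (q0 * p)%nat <= INR (q0 * p) * A) by (apply IH; nia).
    assert (HfF : f (q * p)%nat <= F) by (apply f_mono; nia).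
    pose proof (doubling_step p q0 q A F Hp ltac:(lia) Hq0 HuA HIH HfF).
    lra.
Qed.

Lemma b_multiple (p q : nat) : (n0 <= p)%nat -> (1 <= q)%nat ->
  b (q * p)%nat <= INR (q * p) * (ratio p + 8 * T (Nat.log2 p)).
Proof.
  intros Hp Hq.
  assert (Hlt : (q * p < 2 ^ (Nat.log2 p + q * p))%nat).
  { pose proof (Nat.pow_gt_lin_r 2 (q * p) ltac:(lia)).
    pose proof (Nat.pow_le_mono_r 2 (q * p) (Nat.log2 p + q * p) ltac:(lia) ltac:(lia)).
    lia. }
  pose proof (b_multiple_block p Hp (q * p) q Hq Hlt) as Hblock.
  pose proof (dyadic_tail_nonneg f l f_nonneg dyadic_cv (Nat.log2 p + q * p)).
  pose proof (pos_INR (q * p)).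
  unfold T, H, dyadic_tail in *. nra.
Qed.

(* The quantity g(p) = b_p/p + 8 T(log2 p) whose infimum is the limit. *)
Definition upper_ratio (p : nat) : R := ratio p + 8 * T (Nat.log2 p).

Lemma upper_ratio_nonneg (p : nat) : (1 <= p)%nat -> 0 <= upper_ratio p.
Proof.
  intros Hp. unfold upper_ratio.
  pose proof (ratio_nonneg p Hp). pose proof (dyadic_tail_nonneg f l f_nonneg dyadic_cv (Nat.log2 p)).
  unfold T. lra.
Qed.

Lemma ratio_upper (p : nat) : (n0 <= p)%nat -> exists B, 0 <= B /\
  forall m, (2 * p <= m)%nat ->
    b m <= INR m * upper_ratio p + B + 4 * INR m * T (Nat.log2 m).
Proof.
  intros Hp.
  destruct (finite_upper_bound (fun r => b (p + r)%nat) p) as [B HB].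
  exists B. split; [eapply Rle_trans; [apply b_nonneg | apply (HB 0%nat)]; lia|].
  intros m Hm.
  pose proof (Nat.div_mod_eq m p) as Hdm.
  pose proof (Nat.mod_upper_bound m p ltac:(lia)) as Hr.
  set (q := (m / p - 1)%nat). set (r := (m mod p)%nat) in *.
  assert (Hsplit : m = (q * p + (p + r))%nat) by (unfold q; nia).
  pose proof (b_sub (q * p) (p + r) ltac:(unfold q; nia) ltac:(lia)) as Hsub.
  rewrite <- Hsplit in Hsub.
  pose proof (b_multiple p q Hp ltac:(unfold q; nia)) as Hmul.
  pose proof (HB r ltac:(lia)) as HBr. simpl in HBr.
  assert (f (q * p)%nat <= f m) by (apply f_mono; unfold q; nia).
  assert (f (p + r)%nat <= f m) by (apply f_mono; lia).
  pose proof (f_le_tail f l f_nonneg f_mono dyadic_cv m ltac:(lia)).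
  pose proof (upper_ratio_nonneg p ltac:(lia)).
  assert (INR (q * p) <= INR m) by (apply le_INR; lia).
  unfold upper_ratio, T in *. nra.
Qed.

Lemma ratio_converges : exists L, 0 <= L /\ Un_cv (fun n => ratio (S n)) L.
Proof.
  destruct (nat_infimum (fun p => (n0 <= p)%nat) upper_ratio n0) as [L [HL0 [HLlow HLapprox]]];
    [lia | intros p Hp; apply upper_ratio_nonneg; lia |].
  exists L. split; [exact HL0|]. intros eps Heps.
  destruct (HLapprox (eps / 2) ltac:(lra)) as [p [Hp HpL]].
  destruct (ratio_upper p Hp) as [B [HB0 HB]].
  destruct (dyadic_tail_log2_small f l dyadic_cv (eps / 16) ltac:(lra)) as [M HM].
  destruct (INR_unbounded (4 * B / eps)) as [K HK].
  exists (2 * p + M + K + n0)%nat. intros n Hn. set (m := S n).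
  assert (Hm : 0 < INR m) by (apply lt_0_INR; unfold m; lia).
  assert (HBm : 4 * B < eps * INR m).
  { assert (INR K <= INR m) by (apply le_INR; unfold m; lia).
    assert (4 * B / eps * eps = 4 * B) by (field; lra). nra. }
  specialize (HM m ltac:(unfold m; lia)). specialize (HB m ltac:(unfold m; lia)).
  specialize (HLlow m ltac:(unfold m; lia)).
  pose proof (dyadic_tail_nonneg f l f_nonneg dyadic_cv (Nat.log2 m)).
  rewrite <- (ratio_mul m) in HB by (unfold m; lia).
  unfold R_dist, upper_ratio, T in *. fold m.
  apply Rabs_def1; nra.
Qed.

End AlmostSubadditive.

Theorem propositionA (b f : nat -> R) (n0 : nat) :
  (forall n, (1 <= n)%nat -> 0 <= b n) ->
  (forall n, (1 <= n)%nat -> 0 <= f n) ->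
  (forall n m, (1 <= n)%nat -> (n <= m)%nat -> f n <= f m) ->
  (exists l, Un_cv (dyadic_partial f) l) ->
  (0 < n0)%nat ->
  (forall n m, (n0 <= n)%nat -> (n0 <= m)%nat ->
     b (n + m)%nat <= b n + b m + f n + f m) ->
  exists L, 0 <= L /\ Un_cv (fun n => b (S n) / INR (S n)) L.
Proof.
  intros b_nonneg f_nonneg f_mono [l dyadic_cv] n0_pos b_sub.
  exact (ratio_converges b f n0 l b_nonneg f_nonneg f_mono dyadic_cv n0_pos b_sub).
Qed.
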